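(* Let $G=(V,E)$ be a finite, simple, undirected, connected graph, let $S\subseteq V$ be nonempty and let $\ell\geq 1$ be an integer. (i) If $S$ is an $\ell$-solid-resolving set of $G$, then $S$ is an $\{\ell\}$-resolving set of $G$. (ii) If $S$ is an $\{\ell+1\}$-resolving set of $G$, then $S$ is an $\ell$-solid-resolving set of $G$.
   Context: $d(u,v)$ is the shortest-path distance in $G$; for nonempty $X\subseteq V$, $d(s,X)=\min_{x\in X}d(s,x)$; for $S=\{s_1,\dots,s_k\}$, $\mathcal{D}_S(X)=(d(s_1,X),\dots,d(s_k,X))$. $S$ is an $\{\ell\}$-resolving set if $\mathcal{D}_S(X)\neq\mathcal{D}_S(Y)$ for all distinct nonempty $X,Y\subseteq V$ with $|X|\leq \ell$, $|Y|\leq\ell$. $S$ is an $\ell$-solid-resolving set if $\mathcal{D}_S(X)\neq\mathcal{D}_S(Y)$ for all distinct nonempty $X,Y\subseteq V$ with $|X|\leq\ell$ ($Y$ arbitrary size). *)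

From mathcomp Require Import all_boot.
Set Implicit Arguments. Unset Strict Implicit. Unset Printing Implicit Defensive.

Definition simple_graph (T : finType) (e : rel T) : Prop :=
  symmetric e /\ irreflexive e.

Definition connected_graph (T : finType) (e : rel T) : Prop :=
  forall u v : T, connect e u v.

Fixpoint ball (T : finType) (e : rel T) (n : nat) (u : T) : {set T} :=
  match n with
  | 0 => [set u]
  | n'.+1 => ball e n' u :|: [set y | [exists x in ball e n' u, e x y]]
  end.

(* shortest-path distance: least n with v in the n-ball around u
   (search bounded by #|T|, which suffices in a connected graph) *)
Definition dist (T : finType) (e : rel T) (u v : T) : nat :=
  find (fun n => v \in ball e n u) (iota 0 #|T|).

Definition dist_set (T : finType) (e : rel T) (s : T) (X : {set T}) : nat :=
  \big[minn/#|T|]_(x in X) dist e s x.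

(* distance vector D_S(X) = (d(s_1,X), ..., d(s_k,X)), represented as a
   function on S (vectors compared coordinatewise over s in S) *)
Definition same_vec (T : finType) (e : rel T) (S X Y : {set T}) : Prop :=
  forall s, s \in S -> dist_set e s X = dist_set e s Y.

Definition l_resolving (T : finType) (e : rel T) (l : nat) (S : {set T}) : Prop :=
  forall X Y : {set T}, X != set0 -> Y != set0 -> #|X| <= l -> #|Y| <= l ->
    X != Y -> ~ same_vec e S X Y.

Definition l_solid_resolving (T : finType) (e : rel T) (l : nat) (S : {set T}) : Prop :=
  forall X Y : {set T}, X != set0 -> Y != set0 -> #|X| <= l ->
    X != Y -> ~ same_vec e S X Y.

From HB Require Import structures.
From mathcomp Require Import all_boot.

(* If D_S(X) = D_S(Y) with Y not inside X, pick y in Y \ X: since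
   d(s, y) >= d(s, Y) = d(s, X) for every s, adding y to X does not change
   the distance vector, so X and X + y are two distinct sets of size at most
   l + 1 with the same vector.  If Y is inside X, then X and Y already are.
   Only the fact that d(s, X) is a minimum over X is used. *)

(* [minn] has no unit on [nat]; its commutative semigroup structure is what
   [bigD1] needs for the minima defining [dist_set]. *)
HB.instance Definition _ := SemiGroup.isComLaw.Build nat minn minnA minnC.

Section DistanceVectors.

Variables (T : finType) (e : rel T).

Lemma dist_set_le s (Y : {set T}) y : y \in Y -> dist_set e s Y <= dist e s y.
Proof. by move=> yY; rewrite /dist_set (bigD1 y) //= geq_minl. Qed.

Lemma dist_setU1 s (X : {set T}) y : y \notin X ->
  dist_set e s (y |: X) = minn (dist e s y) (dist_set e s X).
Proof.
move=> yNX; rewrite /dist_set (bigD1 y) ?setU11 //=; congr minn.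
apply: eq_bigl => x; rewrite in_setU1.
by case: eqP => [-> | _] /=; rewrite ?andbT ?andbF ?(negbTE yNX).
Qed.

Lemma same_vec_setU1 (S X Y : {set T}) y :
  same_vec e S X Y -> y \in Y -> y \notin X -> same_vec e S (y |: X) X.
Proof.
move=> XY yY yNX s sS; rewrite dist_setU1 //; apply/minn_idPr.
by rewrite XY //; exact: dist_set_le.
Qed.

Lemma solid_resolving_resolving l (S : {set T}) :
  l_solid_resolving e l S -> l_resolving e l S.
Proof. by move=> solS X Y X0 Y0 lX _; exact: solS. Qed.

Lemma resolving_succ_solid_resolving l (S : {set T}) :
  l_resolving e l.+1 S -> l_solid_resolving e l S.
Proof.
move=> resS X Y X0 Y0 lX XY XYvec.
have lX1 : #|X| <= l.+1 by exact: leqW.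
have [YsubX | /subsetPn [y yY yNX]] := boolP (Y \subset X).
  by apply: (resS X Y) => //; exact: leq_trans (subset_leq_card YsubX) lX1.
apply: (resS (y |: X) X) => //.
- by apply/set0Pn; exists y; exact: setU11.
- by rewrite cardsU1 yNX.
- by apply: contraNneq yNX => <-; exact: setU11.
exact: same_vec_setU1 XYvec yY yNX.
Qed.

End DistanceVectors.

Theorem mainTheorem3 (T : finType) (e : rel T) (S : {set T}) (l : nat) :
  simple_graph e -> connected_graph e -> S != set0 -> 1 <= l ->
  (l_solid_resolving e l S -> l_resolving e l S) /\
  (l_resolving e l.+1 S -> l_solid_resolving e l S).
Proof.
move=> _ _ _ _; split.
- exact: solid_resolving_resolving.
- exact: resolving_succ_solid_resolving.
Qed.
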